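(* Let $\nu$ be a pseudorandom measure on $\mathbb{F}_{q^N}$. For every $m\ge1$ there is a constant $C(m)$, independent of $N$, such that if $0\le\phi_1,\dots,\phi_m\le\nu$, then $\|\mathcal{D}_{K-1}\phi_1\cdots\mathcal{D}_{K-1}\phi_m\|^*_{U^{K-1}}\le C(m)$.
   Context: Fix a prime power $q$, $k\ge1$, $K=q^k$. $\mathbb{F}_{q^N}$ is the set of polynomials in $\mathbb{F}_q[t]$ of degree $<N$ with multiplication modulo a fixed monic irreducible of degree $N$. Gowers norm: $\|\phi\|_{U^d}=\big(\mathbb{E}_{x,h_1,\dots,h_d}\prod_{\omega\in\{0,1\}^d}\mathcal{C}^{|\omega|}\phi(x+\omega\cdot h)\big)^{1/2^d}$. Dual function: for real $\phi$, $\mathcal{D}_d\phi(x)=\mathbb{E}_{h_1,\dots,h_d\in\mathbb{F}_{q^N}}\prod_{\omega\in\{0,1\}^d\setminus\{0\}}\phi(x+\omega_1h_1+\dots+\omega_dh_d)$. Dual norm: $\|g\|^*_{U^{d}}=\sup\{|\langle g,h\rangle|:\|h\|_{U^d}\le1\}$ with $\langle g,h\rangle=\mathbb{E}_x g(x)h(x)$. A measure is a family $\nu_N:\mathbb{F}_{q^N}\to[0,\infty)$. Linear forms condition $(m_0,n_0,k_0)$: for $m\le m_0$ affine forms $\psi_i(\mathbf f)=\sum_{j=1}^nL_{ij}f_j+b_i$ in $n\le n_0$ variables with $L_{ij}\in\{a/c:a,c$ polynomials of degree $<k_0$, $c\ne0\}$ and no two coefficient vectors proportional, $\mathbb{E}(\prod_i\nu(\psi_i(\mathbf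 f)))=1+o(1)$ uniformly in the $b_i$. Correlation condition $l_0$: there is $\tau$ with $\mathbb{E}(\tau^p)=O_p(1)$ for all $p>1$ uniformly in $N$ such that for $l\le l_0$, $\mathbb{E}(\nu(f+h_1)\cdots\nu(f+h_l)\mid f)\le\sum_{1\le i<j\le l}\tau(h_i-h_j)$. Pseudorandom: $(K2^{K-1},3K-4,k)$-linear forms and $2^{K-1}$-correlation conditions. *)

From HB Require Import structures.
From mathcomp Require Import all_boot all_order all_algebra.
From mathcomp Require Import all_classical all_reals.
From mathcomp Require Import constructive_ereal ereal exp.
Set Implicit Arguments. Unset Strict Implicit. Unset Printing Implicit Defensive.
Import Order.TTheory GRing.Theory Num.Theory.
Local Open Scope ring_scope.
Local Open Scope classical_set_scope.

Definition avg (R : realType) (T : finType) (f : T -> R) : R :=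
  (#|T|%:R)^-1 * \sum_(x : T) f x.

Definition cube_pt (G : zmodType) (d : nat) (x : G) (h : {ffun 'I_d -> G})
  (w : {ffun 'I_d -> bool}) : G := x + \sum_(i < d | w i) h i.

(* E_{x,h_1..h_d} prod_{omega in {0,1}^d} phi(x + omega.h)  (real phi, so the
   conjugations C^{|omega|} are trivial) *)
Definition gowers_avg (R : realType) (T : finZmodType) (d : nat) (phi : T -> R) : R :=
  avg (fun x : T => avg (fun h : {ffun 'I_d -> T} =>
    \prod_(w : {ffun 'I_d -> bool}) phi (cube_pt x h w))).

Definition gowers_norm (R : realType) (T : finZmodType) (d : nat) (phi : T -> R) : R :=
  powR (gowers_avg d phi) ((2 ^ d)%:R)^-1.

Definition dual_fun (R : realType) (T : finZmodType) (d : nat) (phi : T -> R) (x : T) : R :=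
  avg (fun h : {ffun 'I_d -> T} =>
    \prod_(w : {ffun 'I_d -> bool} | w != [ffun=> false]) phi (cube_pt x h w)).

Definition inner (R : realType) (T : finType) (g h : T -> R) : R :=
  avg (fun x => g x * h x).

Definition dual_norm (R : realType) (T : finZmodType) (d : nat) (g : T -> R) : \bar R :=
  ereal_sup [set (`|inner g h|)%:E | h in [set h : T -> R | gowers_norm d h <= 1]].

(* F_{q^N} := polynomials of degree < N with multiplication mod P N *)
Notation FqN P N := {poly %/ (P N)}.

(* l is of the form a/c with a, c in F_q[t] of degree < k0, c <> 0 (degree < k0
   means size <= k0; a = 0 is allowed), computed in F_{q^N}. *)
Definition coeff_ok (F : finFieldType) (P : nat -> {poly F}) (N k0 : nat)
  (l : FqN P N) : Prop :=
  exists a c : {poly F}, [/\ (size a <= k0)%N, (size c <= k0)%N, c != 0 &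
    l = in_qpoly (P N) a / in_qpoly (P N) c].

Definition proportional (T : ringType) (n : nat) (u v : 'I_n -> T) : Prop :=
  (exists l : T, forall j, u j = l * v j) \/ (exists l : T, forall j, v j = l * u j).

Definition linear_forms_cond (R : realType) (F : finFieldType) (P : nat -> {poly F})
  (nu : forall N, FqN P N -> R) (m0 n0 k0 : nat) : Prop :=
  forall eps : R, 0 < eps -> exists N0 : nat, forall N, (N0 <= N)%N -> (0 < N)%N ->
  forall m n : nat, (m <= m0)%N -> (n <= n0)%N ->
  forall (L : 'I_m -> 'I_n -> FqN P N) (b : 'I_m -> FqN P N),
    (forall i j, @coeff_ok F P N k0 (L i j)) ->
    (forall i, exists j, L i j != 0) ->
    (forall i i', i != i' -> ~ proportional (L i) (L i')) ->
    `| avg (fun f : {ffun 'I_n -> FqN P N} =>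
          \prod_(i < m) nu N (\sum_(j < n) L i j * f j + b i)) - 1 | <= eps.

Definition correlation_cond (R : realType) (F : finFieldType) (P : nat -> {poly F})
  (nu : forall N, FqN P N -> R) (l0 : nat) : Prop :=
  exists tau : forall N, FqN P N -> R,
  [/\ forall N x, 0 <= tau N x,
      forall p : R, 1 < p -> exists Cp : R, forall N, (0 < N)%N ->
        avg (fun x : FqN P N => powR (tau N x) p) <= Cp &
      forall N, (0 < N)%N -> forall l : nat, (2 <= l <= l0)%N ->
      forall h : 'I_l -> FqN P N,
        avg (fun f : FqN P N => \prod_(i < l) nu N (f + h i))
          <= \sum_(i < l) \sum_(j < l | (i < j)%N) tau N (h i - h j)].

Definition pseudorandom (R : realType) (F : finFieldType) (k : nat) (P : nat -> {poly F})
  (nu : forall N, FqN P N -> R) : Prop :=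
  let K := (#|F| ^ k)%N in
  [/\ forall N x, 0 <= nu N x,
      linear_forms_cond nu (K * 2 ^ (K - 1)) (3 * K - 4) k &
      correlation_cond nu (2 ^ (K - 1))].

From HB Require Import structures.
From mathcomp Require Import all_boot all_order all_algebra.
From mathcomp Require Import all_classical all_reals.
From mathcomp Require Import constructive_ereal ereal exp.
From mathcomp Require Import lra zify.
Import Order.TTheory GRing.Theory Num.Theory.
Local Open Scope ring_scope.
Set Implicit Arguments. Unset Strict Implicit. Unset Printing Implicit Defensive.

(* Expanding the dual functions writes <prod_j D phi_j, h> as an average, over
   shifts b, of Gowers inner products of a cube family carrying h at the vertex 0
   and products of shifted phi_j at the other vertices.  The Gowers-Cauchy-Schwarz
   inequality bounds each of these by the mean of the 2^d-th powers of the Gowers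
   norms of the members.  The vertex 0 contributes ||h||^(2^d) <= 1; dominating the
   phi_j by nu, every other vertex contributes at most E_H W(H)^m, where
   W(H) = E_t prod_w nu(t + H.w) is the correlation of nu along the cube spanned
   by H.  The correlation condition bounds W(H) by a sum of tau(H.w - H.w'), and
   each H.w - H.w' is uniformly distributed, so E_H W(H)^m is controlled by the
   (m+1)-st moment of tau, uniformly in N. *)

Section Average.
Variable R : realType.

Lemma eq_avg (T : finType) (f g : T -> R) : f =1 g -> avg f = avg g.
Proof. by move=> fg; rewrite /avg; congr (_ * _); apply: eq_bigr => x _. Qed.

Lemma avgD (T : finType) (f g : T -> R) :
  avg (fun x => f x + g x) = avg f + avg g.
Proof. by rewrite /avg big_split mulrDr. Qed.

Lemma avgMl (T : finType) (c : R) (f : T -> R) :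
  avg (fun x => c * f x) = c * avg f.
Proof. by rewrite /avg -mulr_sumr mulrCA. Qed.

Lemma avgMr (T : finType) (c : R) (f : T -> R) :
  avg (fun x => f x * c) = avg f * c.
Proof. by rewrite /avg -mulr_suml mulrA. Qed.

Lemma avg_sum (T I : finType) (P : pred I) (F : I -> T -> R) :
  avg (fun x => \sum_(i | P i) F i x) = \sum_(i | P i) avg (F i).
Proof. by rewrite /avg exchange_big mulr_sumr. Qed.

Lemma avg_cst (T : finType) (c : R) : (0 < #|T|)%N -> avg (fun _ : T => c) = c.
Proof.
move=> T_gt0; rewrite /avg sumr_const (eq_card (B := T)) //.
by rewrite -[c *+ _]mulr_natl mulrA mulVf ?mul1r // pnatr_eq0 -lt0n.
Qed.

Lemma ler_avg (T : finType) (f g : T -> R) : (forall x, f x <= g x) -> avg f <= avg g.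
Proof. by move=> fg; rewrite ler_wpM2l ?invr_ge0 ?ler0n ?ler_sum. Qed.

Lemma avg_ge0 (T : finType) (f : T -> R) : (forall x, 0 <= f x) -> 0 <= avg f.
Proof. by move=> f_ge0; rewrite mulr_ge0 ?invr_ge0 ?ler0n ?sumr_ge0. Qed.

Lemma ler_avg_cst (T : finType) (f : T -> R) c :
  (0 < #|T|)%N -> (forall x, f x <= c) -> avg f <= c.
Proof. by move=> T_gt0 fc; rewrite -(avg_cst c T_gt0) ler_avg. Qed.

Lemma ler_norm_avg (T : finType) (f : T -> R) : `|avg f| <= avg (fun x => `|f x|).
Proof.
rewrite normrM ger0_norm ?invr_ge0 ?ler0n //.
by rewrite ler_wpM2l ?invr_ge0 ?ler0n ?ler_norm_sum.
Qed.

Lemma exchange_avg (T1 T2 : finType) (f : T1 -> T2 -> R) :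
  avg (fun x => avg (fun y => f x y)) = avg (fun y => avg (fun x => f x y)).
Proof.
rewrite /avg !mulr_sumr.
under eq_bigr do rewrite !mulr_sumr.
under [RHS]eq_bigr do rewrite !mulr_sumr.
by rewrite exchange_big; apply: eq_bigr => y _; apply: eq_bigr => x _; apply: mulrCA.
Qed.

Lemma reindex_avg (T : finType) (e : T -> T) (f : T -> R) :
  bijective e -> avg (fun x => f (e x)) = avg f.
Proof. by move=> e_bij; rewrite /avg [in RHS](reindex e) //; apply: onW_bij. Qed.

Lemma prod_avg (m : nat) (J : finType) (F : 'I_m -> J -> R) :
  \prod_(j < m) avg (F j) = avg (fun b : {ffun 'I_m -> J} => \prod_(j < m) F j (b j)).
Proof.
rewrite /avg big_split /= bigA_distr_bigA /= prodr_const card_ffun card_ord.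
by rewrite natrX exprVn.
Qed.

Lemma avg_bool (f : bool -> R) : avg f = (f true + f false) / 2.
Proof. by rewrite /avg big_bool card_bool mulrC. Qed.

End Average.

Lemma card_ffun_gt0 (X Y : finType) (y : Y) : (0 < #|{ffun X -> Y}|)%N.
Proof. by apply/card_gt0P; exists [ffun=> y]. Qed.

Section TranslationInvariance.
Variables (R : realType) (T : finZmodType).

Lemma avg_addl (a : T) (f : T -> R) : avg (fun t => f (a + t)) = avg f.
Proof.
by apply: reindex_avg; exists (fun t => - a + t) => t; [apply: addKr | apply: addNKr].
Qed.

Lemma avg_opp (f : T -> R) : avg (fun t => f (- t)) = avg f.
Proof. by apply: reindex_avg; exists (fun t => - t) => t; rewrite opprK. Qed.

Lemma avg_ffun_add d (f : {ffun 'I_d -> T} -> R) (E : {ffun 'I_d -> T}) :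
  avg (fun H : {ffun 'I_d -> T} => f [ffun i => H i + E i]) = avg f.
Proof.
apply: reindex_avg; exists (fun H : {ffun 'I_d -> T} => [ffun i => H i - E i]) => H;
  by apply/ffunP => i; rewrite !ffunE ?addrK ?subrK.
Qed.

End TranslationInvariance.

Section FfunSnoc.
Variable X : Type.

Definition ffun_snoc d (H : {ffun 'I_d -> X}) (h : X) : {ffun 'I_d.+1 -> X} :=
  [ffun i => if unlift ord_max i is Some j then H j else h].

Lemma ffun_snoc_lift d (H : {ffun 'I_d -> X}) h j : ffun_snoc H h (lift ord_max j) = H j.
Proof. by rewrite ffunE liftK. Qed.

Lemma ffun_snoc_widen d (H : {ffun 'I_d -> X}) h j :
  ffun_snoc H h (widen_ord (leqnSn d) j) = H j.
Proof.
have -> : widen_ord (leqnSn d) j = lift ord_max j.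
  by apply: val_inj; rewrite /= /bump leqNgt ltn_ord.
exact: ffun_snoc_lift.
Qed.

Lemma ffun_snoc_max d (H : {ffun 'I_d -> X}) h : ffun_snoc H h ord_max = h.
Proof. by rewrite ffunE unlift_none. Qed.

Lemma ffun_snoc_bij d : bijective (fun p : {ffun 'I_d -> X} * X => ffun_snoc p.1 p.2).
Proof.
exists (fun H : {ffun 'I_d.+1 -> X} =>
  ([ffun j => H (lift ord_max j)] : {ffun 'I_d -> X}, H ord_max)).
  move=> [H h] /=; rewrite ffun_snoc_max; congr (_, _).
  by apply/ffunP => j; rewrite ffunE ffun_snoc_lift.
move=> H /=; apply/ffunP => i; rewrite ffunE.
by case: unliftP => [j ->|->]; rewrite ?ffunE.
Qed.

End FfunSnoc.

Lemma big_ffun_snoc (S : Type) (idx : S) (op : Monoid.com_law idx) (X : finType) d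
  (F : {ffun 'I_d.+1 -> X} -> S) :
  \big[op/idx]_H F H =
  \big[op/idx]_(H : {ffun 'I_d -> X}) \big[op/idx]_(h : X) F (ffun_snoc H h).
Proof.
rewrite pair_big /= (reindex (fun p : {ffun 'I_d -> X} * X => ffun_snoc p.1 p.2)) //.
exact/onW_bij/ffun_snoc_bij.
Qed.

Lemma avg_ffun_snoc (R : realType) (X : finType) d (F : {ffun 'I_d.+1 -> X} -> R) :
  avg F = avg (fun H : {ffun 'I_d -> X} => avg (fun h : X => F (ffun_snoc H h))).
Proof.
rewrite /avg big_ffun_snoc !card_ffun !card_ord expnSr natrM invfM -mulrA mulr_sumr.
by congr (_ * _).
Qed.

Lemma cube_pt_snoc (G : zmodType) d (x : G) (H : {ffun 'I_d -> G}) h w b :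
  cube_pt x (ffun_snoc H h) (ffun_snoc w b) = cube_pt x H w + (if b then h else 0).
Proof.
rewrite /cube_pt big_mkcond big_ord_recr /= !ffun_snoc_max -addrA; congr (_ + _).
rewrite [in RHS]big_mkcond; congr (_ + _); apply: eq_bigr => i _.
by rewrite !ffun_snoc_widen.
Qed.

Section GowersCauchySchwarz.
Variables (R : realType) (T : finZmodType).

Definition gowers_inner d (G : {ffun 'I_d -> bool} -> T -> R) : R :=
  avg (fun x : T => avg (fun H : {ffun 'I_d -> T} => \prod_w G w (cube_pt x H w))).

Definition gowers_fold d (G : {ffun 'I_d.+1 -> bool} -> T -> R) (h : T) :
  {ffun 'I_d -> bool} -> T -> R :=
  fun w y => G (ffun_snoc w false) y * G (ffun_snoc w true) (y + h).

Lemma gowers_innerS d (G : {ffun 'I_d.+1 -> bool} -> T -> R) :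
  gowers_inner G = avg (fun h => gowers_inner (gowers_fold G h)).
Proof.
transitivity (avg (fun x => avg (fun H : {ffun 'I_d -> T} => avg (fun h =>
   \prod_w gowers_fold G h w (cube_pt x H w))))).
  rewrite /gowers_inner; apply: eq_avg => x; rewrite avg_ffun_snoc; apply: eq_avg => H.
  apply: eq_avg => h; rewrite big_ffun_snoc; apply: eq_bigr => w _.
  by rewrite big_bool /= !cube_pt_snoc addr0 mulrC.
by rewrite [RHS]exchange_avg; apply: eq_avg => x; apply: exchange_avg.
Qed.

Definition cube_fiber d (f : T -> R) (H : {ffun 'I_d -> T}) : R :=
  avg (fun x => \prod_w f (cube_pt x H w)).

Lemma cube_pt_addl d (x h : T) (H : {ffun 'I_d -> T}) w :
  cube_pt x H w + h = cube_pt (x + h) H w.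
Proof. by rewrite /cube_pt addrAC. Qed.

Lemma avg_gowers_avg_shift d (f g : T -> R) :
  avg (fun h => gowers_avg d (fun y => f y * g (y + h))) =
  avg (fun H : {ffun 'I_d -> T} => cube_fiber f H * cube_fiber g H).
Proof.
transitivity (avg (fun x => avg (fun H : {ffun 'I_d -> T} => avg (fun h =>
   (\prod_w f (cube_pt x H w)) * \prod_w g (cube_pt (x + h) H w))))).
  rewrite exchange_avg; apply: eq_avg => x; rewrite exchange_avg; apply: eq_avg => H.
  apply: eq_avg => h; rewrite -big_split /=; apply: eq_bigr => w _.
  by rewrite cube_pt_addl.
rewrite exchange_avg; apply: eq_avg => H; rewrite /cube_fiber -avgMr.
apply: eq_avg => x; rewrite avgMl.
by rewrite (avg_addl x (fun y => \prod_w g (cube_pt y H w))).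
Qed.

Lemma gowers_avgS d (f : T -> R) :
  gowers_avg d.+1 f = avg (fun H : {ffun 'I_d -> T} => cube_fiber f H ^+ 2).
Proof.
have -> : gowers_avg d.+1 f = gowers_inner (fun _ : {ffun 'I_d.+1 -> bool} => f) by [].
by rewrite gowers_innerS -avg_gowers_avg_shift.
Qed.

Lemma ler_normM_sqr (a b : R) : `|a * b| <= (a ^+ 2 + b ^+ 2) / 2.
Proof.
rewrite normrM -(real_normK (num_real a)) -(real_normK (num_real b)).
have := sqr_ge0 (`|a| - `|b|).
by move: (`|a|) (`|b|) => x y; nra.
Qed.

Lemma ler_norm_avg_gowers_avg_shift d (f g : T -> R) :
  `|avg (fun h => gowers_avg d (fun y => f y * g (y + h)))| <=
  (gowers_avg d.+1 f + gowers_avg d.+1 g) / 2.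
Proof.
rewrite avg_gowers_avg_shift !gowers_avgS -avgD -avgMr.
by apply: le_trans (ler_norm_avg _) _; apply: ler_avg => H; apply: ler_normM_sqr.
Qed.

Lemma avg_gowers_fold_le d (G : {ffun 'I_d.+1 -> bool} -> T -> R) :
  avg (fun w : {ffun 'I_d -> bool} => `|avg (fun h => gowers_avg d (gowers_fold G h w))|)
  <= avg (fun w => gowers_avg d.+1 (G w)).
Proof.
rewrite [X in _ <= X]avg_ffun_snoc; apply: ler_avg => w.
by rewrite avg_bool addrC; apply: ler_norm_avg_gowers_avg_shift.
Qed.

(* The Gowers-Cauchy-Schwarz inequality with the geometric mean of the norms
   replaced by the arithmetic mean of their 2^d-th powers, which avoids roots. *)
Lemma gowers_cauchy_schwarz d (G : {ffun 'I_d.+1 -> bool} -> T -> R) :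
  `|gowers_inner G| <= avg (fun w => gowers_avg d.+1 (G w)).
Proof.
elim: d G => [|d IH] G; apply: le_trans (avg_gowers_fold_le G); rewrite gowers_innerS.
  have ffun0 (w : {ffun 'I_0 -> bool}) : w = [ffun=> false].
    by apply/ffunP => -[].
  have inner0 h : gowers_inner (gowers_fold G h) =
      avg (fun w : {ffun 'I_0 -> bool} => gowers_avg 0 (gowers_fold G h w)).
    rewrite -[LHS](@avg_cst _ {ffun 'I_0 -> bool} _ (card_ffun_gt0 _ true)).
    apply: eq_avg => w; apply: eq_avg => x; apply: eq_avg => H.
    by apply: eq_bigr => w' _; rewrite (ffun0 w) (ffun0 w').
  under eq_avg => h do rewrite inner0.
  by rewrite exchange_avg; apply: ler_norm_avg.
apply: le_trans (ler_norm_avg _) _.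
apply: le_trans (_ : avg (fun h => avg (fun w => gowers_avg d.+1 (gowers_fold G h w))) <= _).
  by apply: ler_avg => h; apply: IH.
by rewrite exchange_avg; apply: ler_avg => w; apply: ler_norm.
Qed.

End GowersCauchySchwarz.

Section CubeDifferences.
Variables (R : realType) (T : finZmodType).

Lemma cube_pt_false d (x : T) (H : {ffun 'I_d -> T}) : cube_pt x H [ffun=> false] = x.
Proof. by rewrite /cube_pt big1 ?addr0 // => i; rewrite ffunE. Qed.

Lemma cube_ptE d (x : T) (H : {ffun 'I_d -> T}) w : cube_pt x H w = x + cube_pt 0 H w.
Proof. by rewrite /cube_pt add0r. Qed.

Lemma cube_ptD d (x : T) (H H' : {ffun 'I_d -> T}) w :
  cube_pt x [ffun i => H i + H' i] w = cube_pt x H w + cube_pt 0 H' w.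
Proof.
rewrite /cube_pt add0r -addrA; congr (_ + _).
by rewrite -big_split; apply: eq_bigr => i _; rewrite ffunE.
Qed.

Lemma cube_pt_delta d (t : T) (c : 'I_d) w :
  cube_pt 0 [ffun i => if i == c then t else 0] w = if w c then t else 0.
Proof.
rewrite /cube_pt add0r; case wc: (w c).
  rewrite (bigD1 c) //= ffunE eqxx big1 ?addr0 // => i /andP[_ /negbTE ic].
  by rewrite ffunE ic.
by rewrite big1 // => i wi; rewrite ffunE; case: eqP => // ic; rewrite ic wc in wi.
Qed.

(* Shifting H along a coordinate where w and w' differ translates
   H.w - H.w' by +-t, so its distribution is uniform. *)
Lemma avg_cube_pt_sub d (w w' : {ffun 'I_d -> bool}) (f : T -> R) :
  w != w' ->
  avg (fun H : {ffun 'I_d -> T} => f (cube_pt 0 H w - cube_pt 0 H w')) = avg f.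
Proof.
move=> ww'.
have [c wc] : exists c, w c != w' c.
  apply/existsP; rewrite -negb_forall; apply: contra ww' => /forallP ww'_eq.
  by apply/eqP/ffunP => i; apply/eqP.
pose D (H : {ffun 'I_d -> T}) := cube_pt 0 H w - cube_pt 0 H w'.
have shiftD t : avg (fun H => f (D H)) =
    avg (fun H => f (D H + ((if w c then t else 0) - (if w' c then t else 0)))).
  rewrite -(avg_ffun_add _ [ffun i => if i == c then t else 0]).
  apply: eq_avg => H; congr f; rewrite /D !cube_ptD !cube_pt_delta.
  by rewrite opprD addrACA.
rewrite -(@avg_cst R T (avg (fun H => f (D H)))); last by apply/card_gt0P; exists 0.
under eq_avg => t do rewrite (shiftD t).
rewrite exchange_avg -[RHS](@avg_cst R {ffun 'I_d -> T} (avg f) (card_ffun_gt0 _ 0)).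
apply: eq_avg => H.
move: wc; case: (w c); case: (w' c) => // _.
  by rewrite (eq_avg (g := fun t => f (D H + t))) ?avg_addl // => t; rewrite subr0.
rewrite -[RHS](avg_addl (D H)) -[RHS]avg_opp.
by apply: eq_avg => t; rewrite sub0r.
Qed.

End CubeDifferences.

Section DualFunctionProducts.
Variables (R : realType) (T : finZmodType).

(* The cube family whose Gowers inner product, averaged over b, is
   <prod_j D phi_j, h>: the vertex 0 carries h and the vertex w != 0 carries
   the product of the phi_j shifted by b_j.w. *)
Definition dual_family d m (phi : 'I_m -> T -> R) (h : T -> R)
  (b : {ffun 'I_m -> {ffun 'I_d -> T}}) (w : {ffun 'I_d -> bool}) : T -> R :=
  fun y => if w == [ffun=> false] then h y
           else \prod_(j < m) phi j (y + cube_pt 0 (b j) w).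

Lemma shift_family_bij d m (H : {ffun 'I_d -> T}) :
  bijective (fun b : {ffun 'I_m -> {ffun 'I_d -> T}} => [ffun j => [ffun i => H i + b j i]]).
Proof.
exists (fun b : {ffun 'I_m -> {ffun 'I_d -> T}} => [ffun j => [ffun i => b j i - H i]]) => b;
  by apply/ffunP => j; apply/ffunP => i; rewrite !ffunE (addrC (H i)) ?addrK ?subrK.
Qed.

Lemma inner_prod_dual_fun d m (phi : 'I_m -> T -> R) (h : T -> R) :
  inner (fun x => \prod_(j < m) dual_fun d (phi j) x) h =
  avg (fun b : {ffun 'I_m -> {ffun 'I_d -> T}} => gowers_inner (dual_family phi h b)).
Proof.
rewrite /inner /dual_fun.
under eq_avg => x do rewrite prod_avg.
transitivity (avg (fun x => avg (fun H : {ffun 'I_d -> T} =>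
   avg (fun b : {ffun 'I_m -> {ffun 'I_d -> T}} =>
     \prod_w dual_family phi h b w (cube_pt x H w))))).
  apply: eq_avg => x.
  rewrite -[LHS](@avg_cst R {ffun 'I_d -> T} _ (card_ffun_gt0 _ 0)); apply: eq_avg => H.
  rewrite -avgMr -[LHS](reindex_avg _ (shift_family_bij m H)); apply: eq_avg => b.
  rewrite (bigD1 [ffun=> false]) //= {1}/dual_family eqxx cube_pt_false mulrC.
  congr (_ * _); rewrite exchange_big /=; apply: eq_bigr => w w_neq0.
  rewrite /dual_family (negbTE w_neq0).
  by apply: eq_bigr => j _; rewrite ffunE cube_ptD.
under eq_avg => x do rewrite exchange_avg.
by rewrite exchange_avg.
Qed.

Definition cube_corr d (nu : T -> R) (H : {ffun 'I_d -> T}) : R :=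
  avg (fun t => \prod_w nu (t + cube_pt 0 H w)).

Lemma avg_cube_corr_shift d (nu : T -> R) (x : T) (H : {ffun 'I_d -> T}) w :
  w != [ffun=> false] ->
  avg (fun a : {ffun 'I_d -> T} => \prod_w' nu (cube_pt x H w' + cube_pt 0 a w)) =
  cube_corr nu H.
Proof.
move=> w_neq0; pose F s := \prod_w' nu (cube_pt x H w' + s).
transitivity (avg (fun a : {ffun 'I_d -> T} =>
  F (cube_pt 0 a w - cube_pt 0 a [ffun=> false]))).
  by apply: eq_avg => a; rewrite cube_pt_false subr0.
rewrite avg_cube_pt_sub // /cube_corr -[RHS](avg_addl x); apply: eq_avg => t.
by apply: eq_bigr => w' _; rewrite cube_ptE addrAC.
Qed.

(* Dominating each phi_j by nu decouples the m shifts b_j: each contributes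
   one copy of the correlation of nu over the cube. *)
Lemma avg_gowers_avg_dual_family_le d m (phi : 'I_m -> T -> R) (h nu : T -> R) w :
  w != [ffun=> false] -> (forall j x, 0 <= phi j x <= nu x) ->
  avg (fun b : {ffun 'I_m -> {ffun 'I_d -> T}} => gowers_avg d (dual_family phi h b w))
  <= avg (fun H : {ffun 'I_d -> T} => cube_corr nu H ^+ m).
Proof.
move=> w_neq0 phi_nu.
apply: le_trans (_ : avg (fun b : {ffun 'I_m -> {ffun 'I_d -> T}} => avg (fun x =>
   avg (fun H : {ffun 'I_d -> T} =>
   \prod_(j < m) \prod_w' nu (cube_pt x H w' + cube_pt 0 (b j) w)))) <= _).
  apply: ler_avg => b; rewrite /gowers_avg /dual_family (negbTE w_neq0).
  apply: ler_avg => x; apply: ler_avg => H.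
  rewrite [X in _ <= X]exchange_big /=; apply: ler_prod => w' _.
  apply/andP; split; last by apply: ler_prod => j _; apply: phi_nu.
  by apply: prodr_ge0 => j _; case/andP: (phi_nu j (cube_pt x H w' + cube_pt 0 (b j) w)).
rewrite exchange_avg; under eq_avg => x do rewrite exchange_avg.
under eq_avg => x do under eq_avg => H do
  rewrite -(prod_avg (fun (_ : 'I_m) (a : {ffun 'I_d -> T}) =>
    \prod_w' nu (cube_pt x H w' + cube_pt 0 a w))) avg_cube_corr_shift // prodr_const card_ord.
by rewrite avg_cst //; apply/card_gt0P; exists 0.
Qed.

Lemma ler_norm_inner_prod_dual_fun d m (phi : 'I_m -> T -> R) (h nu : T -> R) :
  (forall j x, 0 <= phi j x <= nu x) ->
  `|inner (fun x => \prod_(j < m) dual_fun d.+1 (phi j) x) h| <=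
  Num.max (gowers_avg d.+1 h) (avg (fun H : {ffun 'I_d.+1 -> T} => cube_corr nu H ^+ m)).
Proof.
move=> phi_nu; rewrite inner_prod_dual_fun; apply: le_trans (ler_norm_avg _) _.
apply: le_trans (_ : avg (fun b : {ffun 'I_m -> {ffun 'I_d.+1 -> T}} =>
   avg (fun w => gowers_avg d.+1 (dual_family phi h b w))) <= _).
  by apply: ler_avg => b; apply: gowers_cauchy_schwarz.
rewrite exchange_avg; apply: ler_avg_cst; first exact: (card_ffun_gt0 _ true).
move=> w; have [->|w_neq0] := eqVneq w [ffun=> false].
  rewrite (eq_avg (g := fun _ => gowers_avg d.+1 h)); last first.
    by move=> b; congr gowers_avg; apply: funext => y; rewrite /dual_family eqxx.
  by rewrite avg_cst ?le_max ?lexx //; exact: (card_ffun_gt0 _ (0 : {ffun _ -> T})).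
by apply: le_trans (avg_gowers_avg_dual_family_le h w_neq0 phi_nu) _; rewrite le_max lexx orbT.
Qed.

End DualFunctionProducts.

Section PowerBounds.
Variable R : realType.

Lemma exprD_le (x y : R) m : 0 <= x -> 0 <= y ->
  (x + y) ^+ m <= 2 ^+ m * (x ^+ m + y ^+ m).
Proof.
wlog xy : x y / x <= y => [hwlog x_ge0 y_ge0|x_ge0 y_ge0].
  by case: (leP x y) => [|/ltW] xy; [|rewrite addrC [x ^+ m + _]addrC]; apply: hwlog.
apply: le_trans (_ : (2 * y) ^+ m <= _).
  by apply: lerXn2r; rewrite ?nnegrE; lra.
by rewrite exprMn ler_wpM2l ?exprn_ge0 // lerDr exprn_ge0.
Qed.

Lemma expr_big_le (I : Type) (r : seq I) (P : pred I) (a : I -> R) m :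
  (0 < m)%N -> (forall i, P i -> 0 <= a i) ->
  (\sum_(i <- r | P i) a i) ^+ m <= (2 ^+ m) ^+ size r * \sum_(i <- r | P i) a i ^+ m.
Proof.
move=> m_gt0 a_ge0; elim: r => [|x r IHr].
  by rewrite !big_nil mulr0 expr0n gtn_eqF.
have c_ge1 : 1 <= (2 ^+ m : R) ^+ (size r) by rewrite exprn_ege1 // exprn_ege1 // ler1n.
have S_ge0 : 0 <= \sum_(i <- r | P i) a i by apply: sumr_ge0.
rewrite !big_cons /= exprS; case: ifP => Px; last first.
  apply: le_trans IHr _; rewrite ler_wpM2r ?ler_peMl ?exprn_ge0 ?exprn_ege1 ?ler1n //.
  by apply: sumr_ge0 => i Pi; rewrite exprn_ge0 ?a_ge0.
apply: le_trans (exprD_le m (a_ge0 x Px) S_ge0) _.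
rewrite -mulrA ler_wpM2l ?exprn_ge0 // mulrDr lerD //.
by rewrite ler_peMl ?exprn_ge0 ?a_ge0.
Qed.

Lemma exprn_le1DexprS (x : R) m : 0 <= x -> x ^+ m <= 1 + x ^+ m.+1.
Proof.
move=> x_ge0; have [x_le1|x_gt1] := leP x 1.
  by apply: le_trans (exprn_ile1 _ x_ge0 x_le1) _; rewrite lerDl exprn_ge0.
by apply: le_trans (_ : x ^+ m.+1 <= _); rewrite ?lerDr ?ler_eXn2l.
Qed.

End PowerBounds.

Section CorrelationMoments.
Variables (R : realType) (T : finZmodType).

Lemma avg_cube_corr_expr_le d m (nu tau : T -> R) (Cp : R) :
  let l := #|{ffun 'I_d -> bool}| in
  (0 < m)%N -> (forall t, 0 <= nu t) -> (forall t, 0 <= tau t) ->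
  avg (fun t => tau t ^+ m.+1) <= Cp ->
  (forall h : 'I_l -> T, avg (fun t => \prod_(i < l) nu (t + h i)) <=
     \sum_(i < l) \sum_(j < l | (i < j)%N) tau (h i - h j)) ->
  avg (fun H : {ffun 'I_d -> T} => cube_corr nu H ^+ m) <=
  (2 ^+ m) ^+ (l * l) * ((1 + Cp) *+ (l * l)).
Proof.
move=> l m_gt0 nu_ge0 tau_ge0 tau_moment tau_corr.
pose D (H : {ffun 'I_d -> T}) (p : 'I_l * 'I_l) :=
  cube_pt 0 H (enum_val p.1) - cube_pt 0 H (enum_val p.2).
have corr_le H : cube_corr nu H <= \sum_(p : 'I_l * 'I_l | (p.1 < p.2)%N) tau (D H p).
  have -> : cube_corr nu H = avg (fun t => \prod_(i < l) nu (t + cube_pt 0 H (enum_val i))).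
    by apply: eq_avg => t; rewrite (big_enum_val (A := {: {ffun 'I_d -> bool}})).
  by apply: le_trans (tau_corr _) _; rewrite pair_big_dep.
have moment_le (p : 'I_l * 'I_l) : (p.1 < p.2)%N -> avg (fun H => tau (D H p) ^+ m) <= 1 + Cp.
  move=> p12; have e12 : enum_val p.1 != enum_val p.2.
    by apply: contraTneq p12 => /enum_val_inj ->; rewrite ltnn.
  rewrite (avg_cube_pt_sub (fun t => tau t ^+ m) e12).
  apply: le_trans (ler_avg (fun t => exprn_le1DexprS m (tau_ge0 t))) _.
  by rewrite avgD avg_cst ?lerD2l //; apply/card_gt0P; exists 0.
have Cp_ge0 : 0 <= Cp by apply: le_trans tau_moment; apply: avg_ge0 => t; rewrite exprn_ge0.
apply: le_trans (_ : avg (fun H =>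
    (\sum_(p : 'I_l * 'I_l | (p.1 < p.2)%N) tau (D H p)) ^+ m) <= _).
  apply: ler_avg => H; rewrite lerXn2r ?nnegrE ?corr_le ?sumr_ge0 //.
  by apply: avg_ge0 => t; apply: prodr_ge0.
apply: le_trans (_ : avg (fun H => (2 ^+ m) ^+ (l * l) *
    \sum_(p : 'I_l * 'I_l | (p.1 < p.2)%N) tau (D H p) ^+ m) <= _).
  have size_pairs : size (index_enum {: 'I_l * 'I_l}) = (l * l)%N.
    by rewrite -[in RHS](card_ord l) -card_prod cardT enumT /index_enum locked_withE.
  by apply: ler_avg => H; rewrite -size_pairs expr_big_le.
rewrite avgMl avg_sum ler_wpM2l ?exprn_ge0 //.
apply: le_trans (ler_sum _ moment_le) _.
have -> : (l * l)%N = #|{: 'I_l * 'I_l}| by rewrite card_prod card_ord.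
rewrite -sumr_const big_mkcond ler_sum // => p _.
by case: ifP; rewrite ?addr_ge0.
Qed.

End CorrelationMoments.

Lemma gowers_avg_le1 (R : realType) (T : finZmodType) d (f : T -> R) :
  gowers_norm d f <= 1 -> gowers_avg d f <= 1.
Proof.
apply: contra_le => f_gt1; have f_gt0 := lt_trans ltr01 f_gt1.
rewrite /gowers_norm /powR gt_eqF // expR_gt1 mulr_gt0 ?ln_gt0 ?invr_gt0 ?ltr0n ?expn_gt0 //.
Qed.

Theorem mainTheorem14 (R : realType) (F : finFieldType) (k : nat)
  (P : nat -> {poly F}) (nu : forall N : nat, {poly %/ (P N)} -> R) :
  (0 < k)%N ->
  (forall N : nat, (0 < N)%N ->
     [/\ irreducible_poly (P N), P N \is monic & size (P N) = N.+1]) ->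
  pseudorandom k nu ->
  forall m : nat, (1 <= m)%N ->
  exists C : R, forall N : nat, (0 < N)%N ->
  forall phi : 'I_m -> {poly %/ (P N)} -> R,
    (forall i x, 0 <= phi i x <= nu N x) ->
    let g := (fun x : {poly %/ (P N)} =>
                \prod_(i < m) dual_fun ((#|F| ^ k)%N - 1) (phi i) x) in
    (dual_norm ((#|F| ^ k)%N - 1) g <= C%:E)%E.
Proof.
move=> k_gt0 _ [nu_ge0 _ [tau [tau_ge0 tau_moment tau_corr]]] m m_gt0.
have [d def_d] : exists d, (#|F| ^ k - 1)%N = d.+1.
  have : (1 < #|F| ^ k)%N by rewrite -(exp1n k) ltn_exp2r // card_finNzRing_gt1.
  by exists (#|F| ^ k - 2)%N; lia.
rewrite def_d in tau_corr *; set l := #|{ffun 'I_d.+1 -> bool}|.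
have [|Cp tau_moment_le] := tau_moment m.+1%:R; first by rewrite ltr1n ltnS.
exists (Num.max 1 ((2 ^+ m) ^+ (l * l) * ((1 + Cp) *+ (l * l)))) => N N_gt0 phi phi_nu.
rewrite /dual_norm; apply: ge_ereal_sup => _ [h /gowers_avg_le1 h_le1 <-]; rewrite lee_fin.
apply: le_trans (ler_norm_inner_prod_dual_fun _ h phi_nu) _.
apply: le_max2 h_le1 _; apply: (avg_cube_corr_expr_le (tau := tau N)) => //.
- rewrite (eq_avg (g := fun t => tau N t `^ m.+1%:R)) ?tau_moment_le // => t.
  by rewrite powR_mulrn.
- apply: tau_corr => //.
  by rewrite card_ffun card_bool card_ord leqnn andbT -[1%N](expn0 2) ltn_exp2l.
Qed.
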